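(* Let $p$ be an odd prime. For all $n\ge1$, the quotient $A_n/\Phi_nA$ is a rational vector space (i.e. it is divisible and torsion-free as an abelian group).
   Context: $A$ is the ring of degree zero stable operations in $p$-local complex $K$-theory. Fix $q$ primitive mod $p^2$, $\Psi^q\in A$ the Adams operation, $q_i=q^{(-1)^i\lfloor i/2\rfloor}$, $\Theta_n(X)=\prod_{i=1}^n(X-q_i)$, $\Phi_n=\Theta_n(\Psi^q)$; every element of $A$ is uniquely a convergent sum $\sum_{n\ge0}a_n\Phi_n$ with $a_n\in\mathbb{Z}_{(p)}$, and $A_m=\{\sum_{n\ge m}a_n\Phi_n:a_n\in\mathbb{Z}_{(p)}\}$, an ideal of $A$ containing $\Phi_mA$. *)

From HB Require Import structures.
From mathcomp Require Import all_boot all_order all_algebra.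
Set Implicit Arguments. Unset Strict Implicit. Unset Printing Implicit Defensive.
Import Order.TTheory GRing.Theory Num.Theory.
Local Open Scope ring_scope.

(* Z_(p) as the subring of rat of fractions whose reduced denominator is prime to p *)
Definition Zploc (p : nat) (x : rat) : bool := coprime p `|denq x|%N.

Definition primitive_mod (q : int) (m : nat) : Prop :=
  coprimez q (Posz m) /\
  forall k : nat, (0 < k < totient m)%N -> ((q ^+ k)%R != 1 %[mod Posz m])%Z.

Definition qi (q : int) (i : nat) : rat :=
  (q%:~R : rat) ^ ((-1) ^+ i * Posz (i./2))%R.

Definition Theta (q : int) (n : nat) : {poly rat} :=
  \prod_(1 <= i < n.+1) ('X - (qi q i)%:P).

(* An element of A is the convergent sum sum_n a_n Phi_n, encoded by its
   coefficient sequence a with a_n in Z_(p). *)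
Definition inA (p : nat) (a : nat -> rat) : Prop := forall k, Zploc p (a k).

(* Image of sum_k a_k Phi_k in A/A_m = Z_(p)[X]/(Theta_m), Psi^q |-> X,
   as the reduced representative sum_{k<m} a_k Theta_k (degree < m). *)
Definition trunc (q : int) (a : nat -> rat) (m : nat) : {poly rat} :=
  \sum_(k < m) a k *: Theta q k.

(* A_n = { sum_{k >= n} a_k Phi_k } *)
Definition inAn (p : nat) (n : nat) (a : nat -> rat) : Prop :=
  inA p a /\ forall k, (k < n)%N -> a k = 0.

(* a lies in Phi_n A : a = Phi_n * b for some b in A; the product is determined
   by its images in every quotient A/A_m = Z_(p)[X]/(Theta_m). *)
Definition inPhiA (p : nat) (q : int) (n : nat) (a : nat -> rat) : Prop :=
  exists b, inA p b /\
    forall m, trunc q a m = (Theta q n * trunc q b m) %% Theta q m.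

(* Truncation identifies A with the inverse limit of the rings
   Z_(p)[X]/(Theta_m), and Phi_n acts on coefficient sequences through it.
   Modulo p the nodes q_i are periodic (Fermat), so over F_p every root of
   Theta_m has multiplicity growing with m.  Hence multiplication by Phi_n is
   injective on A/p and maps A onto A_n/p: p is a non-zero-divisor on
   A_n/Phi_nA and A_n = Phi_nA + pA_n.  Integers prime to p are units of
   Z_(p), and divisibility and torsion-freeness by m are multiplicative in m. *)

From HB Require Import structures.
From mathcomp Require Import all_boot all_order all_algebra all_field.
From mathcomp Require Import ring zify.
Set Implicit Arguments. Unset Strict Implicit. Unset Printing Implicit Defensive.
Import Order.TTheory GRing.Theory Num.Theory Pdiv.Ring Pdiv.RingMonic.
Local Open Scope ring_scope.

Section NewtonBasis.
Variables (T : comNzRingType) (qs : nat -> T).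

Definition theta k : {poly T} := \prod_(1 <= i < k.+1) ('X - (qs i)%:P).

Definition theta_tail a k : {poly T} := \prod_(a.+1 <= i < k.+1) ('X - (qs i)%:P).

Definition trunc_poly (x : nat -> T) m : {poly T} := \sum_(k < m) x k *: theta k.

Lemma theta0 : theta 0 = 1.
Proof. by rewrite /theta big_geq. Qed.

Lemma thetaS k : theta k.+1 = theta k * ('X - (qs k.+1)%:P).
Proof. by rewrite /theta big_nat_recr. Qed.

Lemma theta_monic k : theta k \is monic.
Proof. by apply: monic_prod => i _; apply: monicXsubC. Qed.

Lemma size_theta k : size (theta k) = k.+1.
Proof.
elim: k => [|k IH]; first by rewrite theta0 size_poly1.
by rewrite thetaS size_Mmonic ?monicXsubC ?monic_neq0 ?theta_monic // IH size_XsubC addn2.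
Qed.

Lemma coef_theta_deg k : (theta k)`_k = 1.
Proof. by have /monicP := theta_monic k; rewrite lead_coefE size_theta. Qed.

Lemma theta_split a k : (a <= k)%N -> theta k = theta a * theta_tail a k.
Proof. by move=> ak; rewrite /theta /theta_tail -big_cat_nat. Qed.

Lemma theta_tail_split a b k : (a <= b)%N -> (b <= k)%N ->
  theta_tail a k = theta_tail a b * theta_tail b k.
Proof. by move=> ab bk; rewrite /theta_tail -big_cat_nat. Qed.

Lemma theta_tail_id a : theta_tail a a = 1.
Proof. by rewrite /theta_tail big_geq. Qed.

Lemma theta_tail_first a k : (a < k)%N ->
  theta_tail a k = ('X - (qs a.+1)%:P) * theta_tail a.+1 k.
Proof. by move=> ak; rewrite /theta_tail big_ltn. Qed.

Lemma theta_tail_shift a m : (forall i, qs (i + a) = qs i) ->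
  theta_tail a (a + m) = theta m.
Proof.
move=> qs_a; rewrite /theta_tail -{1}[a.+1]add1n big_addn -addnS addKn.
by apply: eq_bigr => i _; rewrite qs_a.
Qed.

Lemma rmodp_addmul_theta (Q G : {poly T}) k :
  rmodp (Q + G * theta k) (theta k) = rmodp Q (theta k).
Proof. by rewrite rmodpD ?theta_monic // rmodp_mull ?theta_monic // addr0. Qed.

Lemma rmodp_rmodp_theta (Q : {poly T}) a k : (a <= k)%N ->
  rmodp (rmodp Q (theta k)) (theta a) = rmodp Q (theta a).
Proof.
move=> ak; rewrite [in RHS](rdivp_eq (theta_monic k) Q).
set D := rdivp Q _; set Rk := rmodp Q _.
by rewrite (theta_split ak) addrC mulrCA mulrC rmodp_addmul_theta.
Qed.

Lemma rmodp_theta_small (Q : {poly T}) m : (size Q <= m.+1)%N ->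
  Q = rmodp Q (theta m) + Q`_m *: theta m.
Proof.
move=> sQ; set Z := Q - Q`_m *: theta m.
have sZ : (size Z <= m)%N.
  apply/leq_sizeP => j mj; rewrite coefB coefZ.
  case: (ltngtP j m) => [|jm|<-]; first by rewrite ltnNge mj.
    rewrite [Q`_j]nth_default ?(leq_trans sQ jm) // sub0r.
    by rewrite [(theta m)`_j]nth_default ?size_theta // mulr0 oppr0.
  by rewrite coef_theta_deg mulr1 subrr.
have <- : rmodp Z (theta m) = rmodp Q (theta m).
  by rewrite /Z -scaleNr -mul_polyC rmodp_addmul_theta.
by rewrite rmodp_small ?size_theta // /Z subrK.
Qed.

Lemma size_trunc_poly x m : (size (trunc_poly x m) <= m)%N.
Proof.
apply: (leq_trans (size_sum _ _ _)); apply/bigmax_leqP => k _.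
by apply: (leq_trans (size_scale_leq _ _)); rewrite size_theta.
Qed.

Lemma trunc_polyS x m : trunc_poly x m.+1 = trunc_poly x m + x m *: theta m.
Proof. by rewrite /trunc_poly big_ord_recr. Qed.

Lemma coef_trunc_poly x k : (trunc_poly x k.+1)`_k = x k.
Proof.
rewrite trunc_polyS coefD coefZ nth_default ?size_trunc_poly // add0r.
by rewrite coef_theta_deg mulr1.
Qed.

Lemma eq_trunc_poly x y m : x =1 y -> trunc_poly x m = trunc_poly y m.
Proof. by move=> xy; apply: eq_bigr => i _; rewrite xy. Qed.

Lemma trunc_poly_lin c x y m :
  trunc_poly (fun i => c * x i + y i) m = c *: trunc_poly x m + trunc_poly y m.
Proof.
rewrite /trunc_poly scaler_sumr -big_split /=; apply: eq_bigr => i _.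
by rewrite scalerDl scalerA.
Qed.

Lemma trunc_poly0 m : trunc_poly (fun=> 0) m = 0.
Proof. by rewrite /trunc_poly big1 // => i _; rewrite scale0r. Qed.

Lemma trunc_poly_inj x y : (forall m, trunc_poly x m = trunc_poly y m) -> x =1 y.
Proof. by move=> xy k; rewrite -coef_trunc_poly xy coef_trunc_poly. Qed.

Lemma rmodp_trunc_poly x m M : (m <= M)%N ->
  rmodp (trunc_poly x M) (theta m) = trunc_poly x m.
Proof.
move=> /subnK <-; elim: (M - m)%N => [|d IH].
  by rewrite add0n rmodp_small ?size_theta ?ltnS ?size_trunc_poly.
rewrite addSn trunc_polyS rmodpD ?theta_monic // IH.
rewrite (theta_split (leq_addl d m)) scalerAr mulrC rmodp_mull ?theta_monic //.
by rewrite addr0.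
Qed.

Definition vanish_below n (x : nat -> T) := forall k, (k < n)%N -> x k = 0.

Definition trunc_quo (x : nat -> T) n j : {poly T} :=
  \sum_(k < j) x k *: theta_tail n k.

Lemma trunc_quoS x n j :
  trunc_quo x n j.+1 = trunc_quo x n j + x j *: theta_tail n j.
Proof. by rewrite /trunc_quo big_ord_recr. Qed.

Lemma trunc_poly_quo x n j :
  vanish_below n x -> trunc_poly x j = theta n * trunc_quo x n j.
Proof.
move=> x_n; rewrite mulr_sumr; apply: eq_bigr => k _.
case: (ltnP k n) => kn; first by rewrite x_n // !scale0r mulr0.
by rewrite (theta_split kn) scalerAr.
Qed.

Lemma horner_trunc_quo x a m : (a < m)%N -> vanish_below a x ->
  (trunc_quo x a m).[qs a.+1] = x a.
Proof.
move=> am x_a; rewrite horner_sum (bigD1 (Ordinal am)) //= theta_tail_id.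
rewrite hornerZ hornerC mulr1 big1 ?addr0 // => i.
rewrite -(inj_eq val_inj) /= hornerZ; case: ltngtP => // [ia|ai] _.
  by rewrite x_a // mul0r.
by rewrite theta_tail_first // hornerM hornerXsubC subrr mul0r mulr0.
Qed.

End NewtonBasis.

Section MulTheta.
Variables (T : comNzRingType) (qs : nat -> T).
Local Notation theta := (theta qs).
Local Notation trunc_poly := (trunc_poly qs).

(* The point of the inverse limit of the [T[X]/(theta m)] given by a
   compatible family [Q]. *)
Definition limit_seq (Q : nat -> {poly T}) k : T :=
  (rmodp (Q k.+1) (theta k.+1))`_k.

Lemma trunc_limit_seq Q : (forall m, exists G, Q m.+1 = Q m + G * theta m) ->
  forall m, trunc_poly (limit_seq Q) m = rmodp (Q m) (theta m).
Proof.
move=> Q_compat; elim=> [|m IH]; first by rewrite /trunc_poly big_ord0 theta0 rmodp1.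
have sQ : (size (rmodp (Q m.+1) (theta m.+1)) <= m.+1)%N.
  by rewrite -ltnS -(size_theta qs m.+1) ltn_rmodp monic_neq0 ?theta_monic.
rewrite [RHS](rmodp_theta_small qs sQ) rmodp_rmodp_theta // trunc_polyS IH.
by have [G QG] := Q_compat m; rewrite {1}QG rmodp_addmul_theta.
Qed.

Definition mul_theta n (b : nat -> T) : nat -> T :=
  limit_seq (fun m => theta n * trunc_poly b m).

Lemma trunc_mul_theta n b m :
  trunc_poly (mul_theta n b) m = rmodp (theta n * trunc_poly b m) (theta m).
Proof.
apply: trunc_limit_seq => k; exists (b k *: theta n).
by rewrite trunc_polyS mulrDr -scalerAr scalerAl.
Qed.

Lemma mul_theta_vanish n b : vanish_below n (mul_theta n b).
Proof.
move=> k kn; rewrite /mul_theta /limit_seq (theta_split qs kn) -mulrA mulrC.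
by rewrite rmodp_mull ?theta_monic // coef0.
Qed.

Lemma mul_theta_lin n c b1 b2 k :
  mul_theta n (fun i => c * b1 i + b2 i) k = c * mul_theta n b1 k + mul_theta n b2 k.
Proof.
rewrite /mul_theta /limit_seq trunc_poly_lin mulrDr rmodpD ?theta_monic //.
by rewrite -scalerAr rmodpZ ?theta_monic // coefD coefZ.
Qed.

Lemma eq_mul_theta n b1 b2 : b1 =1 b2 -> mul_theta n b1 =1 mul_theta n b2.
Proof. by move=> b12 k; rewrite /mul_theta /limit_seq (eq_trunc_poly _ _ b12). Qed.

Lemma mul_theta0 n k : mul_theta n (fun=> 0) k = 0.
Proof. by rewrite /mul_theta /limit_seq trunc_poly0 mulr0 rmod0p coef0. Qed.

Lemma mul_thetaZ n c b k : mul_theta n (fun i => c * b i) k = c * mul_theta n b k.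
Proof.
rewrite -[RHS]addr0 -(mul_theta0 n k) -mul_theta_lin.
by apply: eq_mul_theta => i; rewrite addr0.
Qed.

Definition phi_mult n (x : nat -> T) := exists b, x =1 mul_theta n b.

Lemma eq_phi_mult n x y : phi_mult n x -> x =1 y -> phi_mult n y.
Proof. by move=> [b xb] xy; exists b => k; rewrite -xy. Qed.

Lemma phi_mult_mul_theta n b : phi_mult n (mul_theta n b).
Proof. by exists b. Qed.

Lemma phi_mult0 n : phi_mult n (fun=> 0).
Proof. by exists (fun=> 0) => k; rewrite mul_theta0. Qed.

Lemma phi_mult_lin n c x y : phi_mult n x -> phi_mult n y ->
  phi_mult n (fun k => c * x k + y k).
Proof.
move=> [b xb] [b' yb']; exists (fun i => c * b i + b' i) => k.
by rewrite mul_theta_lin xb yb'.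
Qed.

Definition phi_divisible n (m : T) := forall a, vanish_below n a ->
  exists2 c, vanish_below n c & phi_mult n (fun k => m * c k - a k).

Definition phi_torsionfree n (m : T) :=
  forall a, phi_mult n (fun k => m * a k) -> phi_mult n a.

Lemma phi_divisibleM n m1 m2 :
  phi_divisible n m1 -> phi_divisible n m2 -> phi_divisible n (m1 * m2).
Proof.
move=> D1 D2 a a_n; have [c1 c1_n c1P] := D1 a a_n; have [c2 c2_n c2P] := D2 c1 c1_n.
exists c2 => //; apply: (eq_phi_mult (phi_mult_lin m1 c2P c1P)) => k /=; ring.
Qed.

Lemma phi_torsionfreeM n m1 m2 :
  phi_torsionfree n m1 -> phi_torsionfree n m2 -> phi_torsionfree n (m1 * m2).
Proof.
by move=> T1 T2 a maP; apply/T2/T1/(eq_phi_mult maP) => k; rewrite mulrA.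
Qed.

Lemma phi_divisible_inv n m y : y * m = 1 -> phi_divisible n m.
Proof.
move=> ym a a_n; exists (fun k => y * a k) => [k kn|]; first by rewrite a_n ?mulr0.
by apply: (eq_phi_mult (phi_mult0 n)) => k; rewrite mulrA [m * y]mulrC ym mul1r subrr.
Qed.

Lemma phi_torsionfree_inv n m y : y * m = 1 -> phi_torsionfree n m.
Proof.
move=> ym a /(phi_mult_lin y)/(_ (phi_mult0 n))/eq_phi_mult; apply=> k.
by rewrite addr0 mulrA ym mul1r.
Qed.

End MulTheta.

Section MapMulTheta.
Variables (T T' : comNzRingType) (f : {rmorphism T -> T'}) (qs : nat -> T).

Lemma map_theta k : map_poly f (theta qs k) = theta (f \o qs) k.
Proof. by rewrite rmorph_prod; apply: eq_bigr => i _; rewrite /= map_polyXsubC. Qed.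

Lemma map_trunc_poly x m :
  map_poly f (trunc_poly qs x m) = trunc_poly (f \o qs) (f \o x) m.
Proof. by rewrite rmorph_sum; apply: eq_bigr => i _; rewrite /= map_polyZ map_theta. Qed.

Lemma map_rmodp_theta Q k :
  map_poly f (rmodp Q (theta qs k)) = rmodp (map_poly f Q) (theta (f \o qs) k).
Proof.
rewrite {2}(rdivp_eq (theta_monic qs k) Q) rmorphD rmorphM /= map_theta.
rewrite rmodp_addl_mul_small ?theta_monic // (leq_ltn_trans (size_poly _ _)) //.
by rewrite size_theta -(size_theta qs k) ltn_rmodp monic_neq0 ?theta_monic.
Qed.

Lemma map_mul_theta n b k :
  f (mul_theta qs n b k) = mul_theta (f \o qs) n (f \o b) k.
Proof.
rewrite -(coef_trunc_poly qs) -[RHS](coef_trunc_poly (f \o qs)) -coef_map.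
by rewrite !trunc_mul_theta map_rmodp_theta rmorphM /= map_theta map_trunc_poly.
Qed.

End MapMulTheta.

Section PeriodicNodes.
Variables (T : comNzRingType) (qs : nat -> T) (P : nat).
Hypotheses (P_gt0 : (0 < P)%N) (qs_period : forall i, qs (i + P) = qs i).

Lemma qs_periodic t i : qs (i + P * t) = qs i.
Proof. by elim: t => [|t IH]; rewrite ?muln0 ?addn0 // mulnS addnCA addnC qs_period. Qed.

(* Because [theta_tail n (m + P n) = theta_tail n (P n) * theta m], the
   partial quotients of [a] by [theta n] form a compatible family. *)
Lemma phi_mult_vanish n a : vanish_below n a -> phi_mult qs n a.
Proof.
move=> a_n; set N := (P * n)%N.
have nN : (n <= N)%N by rewrite leq_pmull.
have tailN m : theta_tail qs n (m + N) = theta_tail qs n N * theta qs m.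
  rewrite (theta_tail_split qs nN (leq_addl m N)) addnC theta_tail_shift //.
  by move=> i; apply: qs_periodic.
pose Q m := trunc_quo qs a n (m + N).
have Q_compat m : exists G, Q m.+1 = Q m + G * theta qs m.
  by exists (a (m + N) *: theta_tail qs n N); rewrite /Q addSn trunc_quoS tailN scalerAl.
exists (limit_seq qs Q); apply: (trunc_poly_inj (qs := qs)) => m.
rewrite trunc_mul_theta trunc_limit_seq // rmodp_mulmr ?theta_monic //.
by rewrite /Q -trunc_poly_quo // rmodp_trunc_poly // leq_addr.
Qed.

End PeriodicNodes.

Section PeriodicNodesField.
Variables (F : fieldType) (qs : nat -> F) (P : nat).
Hypotheses (P_gt0 : (0 < P)%N) (qs_period : forall i, qs (i + P) = qs i).

Lemma XsubC_exp_dvd_theta k t :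
  ('X - (qs k.+1)%:P) ^+ t.+1 %| theta qs (k.+1 + P * t).
Proof.
elim: t => [|t IH]; first by rewrite muln0 addn0 expr1 thetaS dvdp_mulIr.
set j := (k.+1 + P * t)%N.
have jP : (k.+1 + P * t.+1)%N = (j + P.-1).+1 by rewrite /j mulnS; lia.
rewrite jP thetaS -jP qs_periodic // (theta_split qs (leq_addr P.-1 j)) exprSr.
by rewrite dvdp_mul ?dvdp_mulr.
Qed.

(* If [k0] is the first index with [b k0 != 0], then [theta m] divides
   [theta n * theta k0 * U] with [U] not vanishing at [qs k0.+1]; but for
   large [m], [theta m] has [qs k0.+1] as a root of multiplicity [> n + k0]. *)
Lemma mul_theta_eq0 n b : mul_theta qs n b =1 (fun=> 0) -> b =1 (fun=> 0).
Proof.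
move=> Phib0 k; apply/eqP/negPn/negP => bk.
have [k0 bk0 k0_min] := ex_minnP (ex_intro (fun i => b i != 0) k bk).
have b_k0 : vanish_below k0 b.
  by move=> i ik0; apply/eqP; apply: contraTT ik0 => /k0_min; rewrite leqNgt.
set m := (k0.+1 + P * (n + k0))%N; set r := qs k0.+1.
have U_r : ~~ root (trunc_quo qs b k0 m) r.
  by rewrite /root horner_trunc_quo // leq_addr.
have theta_dvd : theta qs m %| theta qs n * theta qs k0 * trunc_quo qs b k0 m.
  rewrite /dvdp Pdiv.IdomainMonic.modpE ?theta_monic // -mulrA -trunc_poly_quo //.
  by rewrite -trunc_mul_theta (eq_trunc_poly _ _ Phib0) trunc_poly0.
have := dvdp_trans (XsubC_exp_dvd_theta k0 (n + k0)) theta_dvd.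
rewrite Gauss_dvdpl; last by rewrite coprimep_expl // coprimep_sym coprimep_XsubC.
have theta_neq0 i : theta qs i != 0 by apply/monic_neq0/theta_monic.
move=> /(dvdp_leq (mulf_neq0 (theta_neq0 n) (theta_neq0 k0))).
by rewrite size_exp_XsubC size_Mmonic ?theta_neq0 ?theta_monic // !size_theta; lia.
Qed.

End PeriodicNodesField.

Lemma denq_frac_dvd (u v : int) : (`|denq (u%:~R / v%:~R)| %| `|v|)%N.
Proof.
rewrite -(fracqE (u, v)) den_fracq /=; case: eqP => // _.
by rewrite absz_nat dvdn_div // dvdn_gcdr.
Qed.

Lemma ratB_frac (x y : rat) :
  x - y = (numq x * denq y - numq y * denq x)%:~R / (denq x * denq y)%:~R.
Proof.
rewrite -[x in LHS]divq_num_den -[y in LHS]divq_num_den !rmorphB !rmorphM /=.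
by field; rewrite !intr_eq0 !denq_neq0.
Qed.

Lemma ratM_frac (x y : rat) :
  x * y = (numq x * numq y)%:~R / (denq x * denq y)%:~R.
Proof.
rewrite -[x in LHS]divq_num_den -[y in LHS]divq_num_den !rmorphM /=.
by field; rewrite !intr_eq0 !denq_neq0.
Qed.

Section LocalIntegers.
Variable p : nat.

Lemma Zploc_frac (u v : int) : coprime p `|v| -> Zploc p (u%:~R / v%:~R).
Proof. exact/coprime_dvdr/denq_frac_dvd. Qed.

Lemma coprime_denqM x y : Zploc p x -> Zploc p y -> coprime p `|denq x * denq y|.
Proof. by move=> xp yp; rewrite abszM coprimeMr; apply/andP. Qed.

Fact Zploc_subring : subring_closed (Zploc p).
Proof.
split=> [|x y|x y]; rewrite /in_mem /=.
- exact: coprimen1.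
- by move=> xp yp; rewrite ratB_frac Zploc_frac ?coprime_denqM.
- by move=> xp yp; rewrite ratM_frac Zploc_frac ?coprime_denqM.
Qed.

HB.instance Definition _ := GRing.isSubringClosed.Build rat (Zploc p) Zploc_subring.

Record zloc := Zloc { zloc_val : rat; zloc_valP : Zploc p zloc_val }.
HB.instance Definition _ := [isSub for zloc_val].
HB.instance Definition _ := [Choice of zloc by <:].
HB.instance Definition _ := [SubChoice_isSubComNzRing of zloc by <:].

End LocalIntegers.

Section ReductionModp.
Variable p : nat.
Hypothesis p_pr : prime p.
Local Notation R := (zloc p).

Lemma Fp_intr_eq0 (z : int) : ((z%:~R : 'F_p) == 0) = (p %| `|z|)%N.
Proof. by rewrite -(dvdz_pcharf (pchar_Fp p_pr)). Qed.

Lemma Fp_intr_neq0 (z : int) : coprime p `|z| -> (z%:~R : 'F_p) != 0.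
Proof. by rewrite Fp_intr_eq0 -prime_coprime. Qed.

Lemma Fp_fermat (x : 'F_p) : x != 0 -> x ^+ p.-1 = 1.
Proof.
move=> x0; apply: (mulfI x0); rewrite mulr1 -exprS prednK ?prime_gt0 //.
by rewrite -[X in x ^+ X](card_Fp p_pr) expf_card.
Qed.

Definition redq (x : rat) : 'F_p := (numq x)%:~R / (denq x)%:~R.

Lemma redq_frac (u v : int) :
  coprime p `|v| -> redq (u%:~R / v%:~R) = u%:~R / v%:~R.
Proof.
move=> pv; set x := _ / _.
have v0 : v != 0 by apply: contraTneq pv => ->; rewrite prime_coprime // dvdn0.
have cross : numq x * v = u * denq x.
  by apply: (@intr_inj rat); rewrite !rmorphM /= numqE /x; field; rewrite intr_eq0.
have px : coprime p `|denq x| by apply: coprime_dvdr (denq_frac_dvd u v) pv.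
by apply/eqP; rewrite /redq eqr_div ?Fp_intr_neq0 // -!rmorphM /= cross.
Qed.

Definition red (x : R) : 'F_p := redq (val x).

Lemma redB : {morph red : x y / x - y}.
Proof.
move=> x y; rewrite /red rmorphB /= ratB_frac redq_frac ?coprime_denqM ?zloc_valP //.
rewrite /redq !rmorphB !rmorphM /=.
by field; apply/andP; split; apply/Fp_intr_neq0/zloc_valP.
Qed.

Lemma redM : {morph red : x y / x * y}.
Proof.
move=> x y; rewrite /red rmorphM /= ratM_frac redq_frac ?coprime_denqM ?zloc_valP //.
rewrite /redq !rmorphM /=.
by field; apply/andP; split; apply/Fp_intr_neq0/zloc_valP.
Qed.

Lemma red1 : red 1 = 1.
Proof. by rewrite /red /redq rmorph1 /= divr1. Qed.

HB.instance Definition _ := GRing.isZmodMorphism.Build R 'F_p red redB.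
HB.instance Definition _ := GRing.isMonoidMorphism.Build R 'F_p red (red1, redM).

Lemma red_natr (z : 'F_p) : red (z%:R) = z.
Proof. by rewrite rmorph_nat natr_Zp. Qed.

Lemma p_neq0 : (p%:R : rat) != 0.
Proof. by rewrite pnatr_eq0 -lt0n prime_gt0. Qed.

Lemma Zploc_divp (x : R) : red x = 0 -> Zploc p (val x / p%:R).
Proof.
move=> /eqP; rewrite /red /redq mulf_eq0 invr_eq0.
rewrite (negPf (Fp_intr_neq0 (zloc_valP x))) orbF Fp_intr_eq0 => p_num.
have num_x : (numq (val x) %/ p)%Z * p = numq (val x) by apply: divzK.
have -> : val x / p%:R = (numq (val x) %/ p)%Z%:~R / (denq (val x))%:~R.
  rewrite -[val x in LHS]divq_num_den -[in LHS]num_x rmorphM /=.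
  by field; rewrite p_neq0 intr_eq0 denq_neq0.
exact: Zploc_frac (zloc_valP x).
Qed.

Definition quo_p (x : R) : R := insubd 0 (val x / p%:R).

Lemma quo_pK (x : R) : red x = 0 -> p%:R * quo_p x = x.
Proof.
move=> /Zploc_divp xp; apply: val_inj.
by rewrite rmorphM rmorph_nat /= insubdK // mulrC divfK ?p_neq0.
Qed.

Lemma lreg_p : GRing.lreg (p%:R : R).
Proof.
by move=> x y /(congr1 val); rewrite !rmorphM rmorph_nat /= => /(mulfI p_neq0)/val_inj.
Qed.

Lemma zloc_inv_coprime m : coprime p m -> exists y : R, y * m%:R = 1.
Proof.
move=> pm; have m0 : (m%:R : rat) != 0.
  by rewrite pnatr_eq0; apply: contraTneq pm => ->; rewrite prime_coprime // dvdn0.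
have ym : Zploc p (m%:R)^-1.
  by rewrite /Zploc pmulrn denqVz // -(intr_eq0 rat) -pmulrn.
exists (insubd 0 (m%:R)^-1); apply: val_inj.
by rewrite rmorphM rmorph_nat rmorph1 /= insubdK // mulVf.
Qed.

End ReductionModp.

Section LocalNodes.
Variables (p : nat) (q : int).
Hypotheses (p_pr : prime p) (pq : coprime p `|q|).
Local Notation R := (zloc p).

Lemma q_neq0 : q != 0.
Proof. by apply: contraTneq pq => ->; rewrite prime_coprime // dvdn0. Qed.

Definition qinv : R := insubd 0 (q%:~R)^-1.

Lemma zloc_val_qinv : zloc_val qinv = (q%:~R)^-1.
Proof. by rewrite insubdK // /in_mem /= /Zploc denqVz ?q_neq0. Qed.

Lemma mulr_qinv : q%:~R * qinv = 1.
Proof.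
apply: val_inj; rewrite rmorphM rmorph_int rmorph1 /= zloc_val_qinv.
by rewrite divff ?intr_eq0 ?q_neq0.
Qed.

Definition nodes i : R := if odd i then qinv ^+ i./2 else q%:~R ^+ i./2.

Lemma zloc_val_nodes i : zloc_val (nodes i) = qi q i.
Proof.
rewrite /nodes /qi -signr_odd; case: odd; rewrite [val _]rmorphXn /=.
  by rewrite zloc_val_qinv expr1 mulN1r -exprz_inv.
by rewrite -[zloc_val _]/(val _) rmorph_int expr0 mul1r.
Qed.

Lemma red_nodes_period i : red (nodes (i + (p.-1).*2)) = red (nodes i).
Proof.
have qqinv : red q%:~R * red qinv = 1 by rewrite -rmorphM mulr_qinv rmorph1.
have := oner_neq0 'F_p; rewrite -qqinv mulf_eq0 negb_or => /andP[q_neq0 qinv_neq0].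
rewrite /nodes oddD odd_double addbF halfD odd_double andbF add0n doubleK.
by case: odd; rewrite exprD rmorphM !rmorphXn /= Fp_fermat // mulr1.
Qed.

Lemma period_gt0 : (0 < (p.-1).*2)%N.
Proof. by rewrite double_gt0 -ltnS prednK ?prime_gt1 ?prime_gt0. Qed.

Local Notation Phi := (mul_theta nodes).

Lemma zloc_phi_divisible_p n : phi_divisible nodes n p%:R.
Proof.
move=> a a_n.
have red_a_n : vanish_below n (@red p \o a) by move=> k kn; rewrite /= a_n ?rmorph0.
have [b red_ab] := phi_mult_vanish period_gt0 red_nodes_period red_a_n.
pose b' k : R := (b k : nat)%:R.
have red_diff k : red (a k - Phi n b' k) = 0.
  rewrite rmorphB map_mul_theta /= [red (a k)]red_ab.
  by rewrite (eq_mul_theta _ _ (b2 := b)) ?subrr // => i; rewrite /= red_natr.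
exists (fun k => quo_p (a k - Phi n b' k)) => [k kn|].
  by apply: (@lreg_p p p_pr); rewrite quo_pK // a_n // mul_theta_vanish // subrr mulr0.
have Phi_b' := phi_mult_lin (-1) (phi_mult_mul_theta nodes n b') (phi_mult0 nodes n).
by apply: (eq_phi_mult Phi_b') => k; rewrite quo_pK //; ring.
Qed.

Lemma zloc_phi_torsionfree_p n : phi_torsionfree nodes n p%:R.
Proof.
move=> a [b ab].
have red_b : @red p \o b =1 (fun=> 0).
  apply: (mul_theta_eq0 period_gt0 red_nodes_period (n := n)) => k.
  by rewrite -map_mul_theta -ab rmorphM rmorph_nat pchar_Fp_0 // mul0r.
exists (fun k => quo_p (b k)) => k; apply: (@lreg_p p p_pr).
by rewrite ab -mul_thetaZ; apply: eq_mul_theta => i; rewrite quo_pK //; apply: red_b.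
Qed.

Lemma zloc_phi_divisible_torsionfree n m : (0 < m)%N ->
  phi_divisible nodes n m%:R /\ phi_torsionfree nodes n m%:R.
Proof.
move=> m0; have [m' pm' ->] := pfactor_coprime p_pr m0.
have [y ym] := zloc_inv_coprime p_pr pm'.
rewrite natrM natrX; split.
  apply: (phi_divisibleM (phi_divisible_inv _ ym)).
  elim: (logn p m) => [|e IH]; first exact: (phi_divisible_inv _ (mulr1 1)).
  by rewrite exprS; apply: (phi_divisibleM (zloc_phi_divisible_p (n := n)) IH).
apply: (phi_torsionfreeM (phi_torsionfree_inv ym)).
elim: (logn p m) => [|e IH]; first exact: (phi_torsionfree_inv (mulr1 1)).
by rewrite exprS; apply: (phi_torsionfreeM (zloc_phi_torsionfree_p (n := n)) IH).
Qed.

End LocalNodes.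

Section Transfer.
Variables (p : nat) (q : int).
Hypotheses (p_pr : prime p) (pq : coprime p `|q|).
Local Notation R := (zloc p).
Local Notation nodes := (nodes p q).

Lemma Theta_nodes k : Theta q k = theta (val \o nodes) k.
Proof. by apply: eq_bigr => i _; rewrite /comp /= (zloc_val_nodes p_pr pq). Qed.

Lemma eq_trunc x y m : x =1 y -> trunc q x m = trunc q y m.
Proof. by move=> xy; apply: eq_bigr => i _; rewrite xy. Qed.

Lemma trunc_zloc (y : nat -> R) m :
  trunc q (val \o y) m = map_poly val (trunc_poly nodes y m).
Proof. by rewrite map_trunc_poly; apply: eq_bigr => i _; rewrite Theta_nodes. Qed.

Lemma modp_Theta_zloc n b m :
  (Theta q n * trunc q (val \o b) m) %% Theta q m =
  map_poly val (trunc_poly nodes (mul_theta nodes n b) m).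
Proof.
rewrite trunc_zloc !Theta_nodes -!(map_theta val) -rmorphM.
rewrite Pdiv.IdomainMonic.modpE ?map_theta ?theta_monic //.
by rewrite -map_rmodp_theta -trunc_mul_theta.
Qed.

Lemma eq_inPhiA n x y : inPhiA p q n x -> x =1 y -> inPhiA p q n y.
Proof. by move=> [b [bA xb]] xy; exists b; split=> // m; rewrite -xb (eq_trunc _ xy). Qed.

Lemma inPhiA_zloc n (y : nat -> R) : inPhiA p q n (val \o y) <-> phi_mult nodes n y.
Proof.
split=> [[b [bA yb]]|[b yb]].
  pose b' k : R := insubd 0 (b k).
  have bb' : b =1 val \o b' by move=> k; rewrite /= insubdK //; apply: bA.
  exists b'; apply: (trunc_poly_inj (qs := nodes)) => m.
  apply: (map_inj_poly val_inj (rmorph0 _)).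
  by rewrite -trunc_zloc yb (eq_trunc _ bb') modp_Theta_zloc.
exists (val \o b); split=> [k|m]; first exact: zloc_valP.
by rewrite modp_Theta_zloc -trunc_zloc; apply: eq_trunc => k /=; rewrite yb.
Qed.

Lemma inAn_zloc n a :
  inAn p n a -> exists2 a' : nat -> R, vanish_below n a' & a =1 val \o a'.
Proof.
move=> [aA a_n]; exists (fun k => insubd 0 (a k)) => [k kn|k].
  by apply: val_inj; rewrite insubdK ?rmorph0; [exact: a_n | exact: aA].
by apply/esym/insubdK/aA.
Qed.

Lemma inAn_val n (c : nat -> R) : vanish_below n c -> inAn p n (val \o c).
Proof.
by move=> c_n; split=> [k|k /c_n c0]; [exact: zloc_valP | rewrite /comp c0 rmorph0].
Qed.

End Transfer.

Theorem proposition3p3 (p : nat) (q : int) :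
  prime p -> odd p -> primitive_mod q (p ^ 2) ->
  forall n : nat, (1 <= n)%N ->
    (* A_n / Phi_n A is divisible *)
    (forall (a : nat -> rat) (m : nat), (0 < m)%N -> inAn p n a ->
       exists c : nat -> rat, inAn p n c /\
         inPhiA p q n (fun k => m%:R * c k - a k)) /\
    (* A_n / Phi_n A is torsion-free *)
    (forall (a : nat -> rat) (m : nat), (0 < m)%N -> inAn p n a ->
       inPhiA p q n (fun k => m%:R * a k) -> inPhiA p q n a).
Proof.
move=> p_pr _ [q_cop _] n _.
have pq : coprime p `|q| by move: q_cop; rewrite coprimezE coprime_pexpr // coprime_sym.
split=> a m m0 /inAn_zloc [a' a'_n aa'].
  have [D _] := zloc_phi_divisible_torsionfree p_pr pq n m0.
  have [c c_n cP] := D a' a'_n.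
  exists (val \o c); split; first exact: inAn_val.
  apply: (eq_inPhiA ((inPhiA_zloc p_pr pq n _).2 cP)) => k.
  by rewrite aa' /comp rmorphB rmorphM rmorph_nat.
move=> maP; have [_ TF] := zloc_phi_divisible_torsionfree p_pr pq n m0.
have a'P : phi_mult (nodes p q) n a'.
  apply: TF; apply/(inPhiA_zloc p_pr pq); apply: (eq_inPhiA maP) => k.
  by rewrite aa' /comp rmorphM rmorph_nat.
by apply: (eq_inPhiA ((inPhiA_zloc p_pr pq n a').2 a'P)) => k; rewrite aa'.
Qed.
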